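(* Assume $n>3t+2d$. In any execution of Algorithm 1, the mbrb-broadcast of an app-message by a correct process $p_i$ entails the sending of at most $2n^2$ implementation messages by correct processes.
   Context: System model. There are $n$ asynchronous processes $p_1,\dots,p_n$ with distinct known identities. Up to $t$ are Byzantine (arbitrary behavior); the rest are correct; $c$ is the number of correct processes. The network is fully connected, asynchronous, never corrupts/duplicates/creates messages; ''broadcast $M$'' sends $M$ to all $n$ processes (counting as $n$ sent imp-messages); a message adversary may suppress, per broadcast by a correct process, up to $d<c$ copies addressed to correct processes. Signatures are unforgeable and public keys are known. Algorithm 1 (code for $p_i$). Each process stores, for each triplet $(m,sn,j)$, a set of saved valid signatures of that triplet, at most one per signer. On $\mathrm{mbrb\_broadcast}(m,sn)$: $p_i$ saves its own signature of $(m,sn,i)$ and broadcasts $\mathrm{BUNDLE}(m,sn,i,S)$, $S$ the saved signatures for $(m,sn,i)$. On receiving $\mathrm{BUNDLE}(m,sn,j,sigs)$: if $p_i$ has not already mbrb-delivered some $(-,sn,j)$ and $sigs$ contains a valid signature of $(m,sn,j)$ by $p_j$, then: (1) save all new valid signatures of $(m,sn,j)$ in $sigs$; (2) if $p_i$ has not yet signed any $(-,sn,j)$, save its own signature of $(m,sn,j)$ and broadcast $\mathrm{BUNDLE}(m,sn,j,\text{all saved signatures for }(m,sn,j))$; (3) if strictly more than $\frac{n+t}{2}$ signatures for $(m,sn,j)$ are saved, broadcast $\mathrm{BUNDLE}(m,sn,j,\text{all saved signatures})$ and mbrb-deliver $(m,sn,j)$. *)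

From mathcomp Require Import all_boot.
Set Implicit Arguments. Unset Strict Implicit. Unset Printing Implicit Defensive.

Section MBRB.
Variables (n t : nat) (M : eqType) (B : {set 'I_n}).
(* n processes 'I_n; B = set of Byzantine processes; t = resilience bound,
   used in the delivery threshold (n+t)/2; M = app-messages. *)

Definition proc := 'I_n.
Definition triplet := (M * nat * proc)%type.
(* symbolic signature: (k, tr) is the (unique, unforgeable) signature of tr by p_k *)
Definition signature := (proc * triplet)%type.
Definition bundle := (triplet * seq signature)%type.

Record lstate := LState {
  saved : triplet -> seq signature;
  signed : nat -> proc -> bool;          (* has signed some (-, sn, j) *)
  delivered : nat -> proc -> bool }.     (* has mbrb-delivered some (-, sn, j) *)

Definition lstate0 : lstate :=
  LState (fun _ => [::]) (fun _ _ => false) (fun _ _ => false).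

Definition upd_saved (st : lstate) (tr : triplet) (S : seq signature) : lstate :=
  LState (fun tr' => if tr' == tr then S else saved st tr') (signed st) (delivered st).
Definition set_signed (st : lstate) (sn : nat) (j : proc) : lstate :=
  LState (saved st) (fun sn' j' => ((sn' == sn) && (j' == j)) || signed st sn' j')
         (delivered st).
Definition set_delivered (st : lstate) (sn : nat) (j : proc) : lstate :=
  LState (saved st) (signed st)
         (fun sn' j' => ((sn' == sn) && (j' == j)) || delivered st sn' j').

Definition save_new (S : seq signature) (tr : triplet) (sigs : seq signature) :=
  foldl (fun acc s => if (s.2 == tr) && (s \notin acc) then rcons acc s else acc) S sigs.

Definition on_bundle (k : proc) (st : lstate) (b : bundle) : lstate * seq bundle :=
  let tr := b.1 in let sigs := b.2 in
  let sn := tr.1.2 in let j := tr.2 in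
  if ~~ delivered st sn j && ((j, tr) \in sigs) then
    let st1 := upd_saved st tr (save_new (saved st tr) tr sigs) in
    let p2 := if ~~ signed st1 sn j then
                let S2 := save_new (saved st1 tr) tr [:: (k, tr)] in
                (set_signed (upd_saved st1 tr S2) sn j, [:: (tr, S2)])
              else (st1, [::]) in
    let st2 := p2.1 in
    (* (3) : strictly more than (n+t)/2 saved signatures *)
    if n + t < 2 * size (saved st2 tr) then
      (set_delivered st2 sn j, p2.2 ++ [:: (tr, saved st2 tr)])
    else p2
  else (st, [::]).

(* point-to-point imp-messages: (sender, receiver, content) *)
Definition netmsg := (proc * proc * bundle)%type.

Definition bcast (i : proc) (b : bundle) : seq netmsg :=
  [seq (i, k, b) | k <- enum 'I_n].

Record config := Config {
  lst : proc -> lstate;             (* local states (meaningful for correct processes) *)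
  net : seq netmsg;                 (* messages sent by correct processes, in transit *)
  sent : seq netmsg;                (* log of all imp-messages sent by correct processes *)
  invoked : seq (proc * M * nat) }.

Definition config0 : config := Config (fun _ => lstate0) [::] [::] [::].

Definition upd_lst (f : proc -> lstate) (i : proc) (st : lstate) : proc -> lstate :=
  fun k => if k == i then st else f k.

Definition do_invoke (c : config) (i : proc) (m : M) (sn : nat) : config :=
  let st := lst c i in
  let tr : triplet := (m, sn, i) in
  let S := save_new (saved st tr) tr [:: (i, tr)] in
  let st' := set_signed (upd_saved st tr S) sn i in
  let out := bcast i (tr, S) in
  Config (upd_lst (lst c) i st') (net c ++ out) (sent c ++ out)
         (rcons (invoked c) (i, m, sn)).

Definition do_receive (c : config) (k : proc) (net' : seq netmsg) (b : bundle) : config :=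
  let r := on_bundle k (lst c k) b in
  let out := flatten [seq bcast k o | o <- r.2] in
  Config (upd_lst (lst c) k r.1) (net' ++ out) (sent c ++ out) (invoked c).

(* Unforgeability: a Byzantine process can only use signatures of Byzantine
   signers, or signatures it has received from correct processes. *)
Definition byz_can_send (c : config) (b : bundle) : bool :=
  all (fun s : signature => (s.1 \in B) ||
         has (fun e : netmsg => (e.1.2 \in B) && (s \in e.2.2)) (sent c)) b.2.

Inductive step : config -> config -> Prop :=
| StepInvoke c i m sn :
    i \notin B ->
    ~~ has (fun e : proc * M * nat => (e.1.1 == i) && (e.2 == sn)) (invoked c) ->
    step c (do_invoke c i m sn)
| StepRecvCorrect c i k b :
    k \notin B -> (i, k, b) \in net c ->
    step c (do_receive c k (rem (i, k, b) (net c)) b)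
| StepRecvByz c (j k : proc) b :
    j \in B -> k \notin B -> byz_can_send c b ->
    step c (do_receive c k (net c) b).

Inductive reachable : config -> Prop :=
| Reach0 : reachable config0
| ReachS c c' : reachable c -> step c c' -> reachable c'.

Definition imp_msgs_for (c : config) (tr : triplet) : nat :=
  count (fun e : netmsg => (e.1.1 \notin B) && (e.2.1 == tr)) (sent c).

End MBRB.

From mathcomp Require Import all_boot.

Set Implicit Arguments.
Unset Strict Implicit.
Unset Printing Implicit Defensive.

(* Every imp-message that a correct process p_k sends about a slot (sn, j) is
   part of a broadcast that Algorithm 1 performs only while p_k switches on one
   of its two flags "has signed some (-, sn, j)" and "has delivered some
   (-, sn, j)".  Each flag is switched on once, so p_k sends at most 2n messages
   for the slot, and the n senders at most 2n^2.  The delicate case is the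
   broadcast of p_i at invocation: it also switches on the signed flag of
   (sn, i), which cannot already be on, because by unforgeability p_i can only
   have met a valid signature of (-, sn, i) by itself after invoking
   mbrb_broadcast(-, sn), which it does once per sn. *)

Section Handler.
Variables (n t : nat) (M : eqType).

Lemma mem_save_new (S : seq (signature n M)) tr sigs s :
  s \in save_new S tr sigs -> (s \in S) || (s \in sigs).
Proof.
elim: sigs S => [|x xs IH] S /=; first by rewrite orbF.
move=> /IH /orP[|xs_s]; last by rewrite inE xs_s !orbT.
case: ifP => _ /=; last by move->.
by rewrite mem_rcons !inE => /orP[->|->]; rewrite ?orbT.
Qed.

Definition flags (st : lstate n M) sn j : nat :=
  signed st sn j + delivered st sn j.

Variables (k : proc n) (st : lstate n M) (b : bundle n M).
Local Notation r := (on_bundle t k st b).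

Lemma on_bundle_out o : o \in r.2 -> o = (b.1, saved r.1 b.1).
Proof.
rewrite /on_bundle; case: ifP => //= _.
by case: ifP => _; case: ifP => _ //=; rewrite ?eqxx !inE ?orbb => /eqP.
Qed.

Lemma on_bundle_saved tr s : s \in saved r.1 tr ->
  [\/ s \in saved st tr, s \in b.2 | s = (k, b.1) /\ (b.1.2, b.1) \in b.2].
Proof.
rewrite /on_bundle; case: ifP => [/andP[_ orig]|_]; last by constructor.
have [-> | ne] := eqVneq tr b.1; last first.
  by case: ifP => _; case: ifP => _ /=; rewrite (negbTE ne); constructor.
have from_save_new : s \in save_new (saved st b.1) b.1 b.2 ->
    [\/ s \in saved st b.1, s \in b.2 | s = (k, b.1) /\ (b.1.2, b.1) \in b.2].
  by case/mem_save_new/orP; [constructor 1 | constructor 2].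
case: ifP => _; case: ifP => _ /=; rewrite !eqxx //=; case: ifP => _ //.
all: by rewrite mem_rcons inE => /orP[/eqP-> | /from_save_new]; first constructor 3.
Qed.

Lemma on_bundle_flags_mono sn j : flags st sn j <= flags r.1 sn j.
Proof.
rewrite /on_bundle /flags; case: ifP => _ //.
by case: ifP => _; case: ifP => _ /=; case: ((sn == b.1.1.2) && (j == b.1.2));
  rewrite /= ?leq_add2l ?leq_add2r ?leq_add ?leq_b1.
Qed.

Lemma on_bundle_flags_grow sn j : flags st sn j < flags r.1 sn j ->
  [/\ sn = b.1.1.2, j = b.1.2 & (b.1.2, b.1) \in b.2].
Proof.
rewrite /on_bundle /flags; case: ifP => [/andP[_ orig]|_]; last by rewrite ltnn.
by case: ifP => _; case: ifP => _ /=;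
  case: (sn =P b.1.1.2) => [->|_]; case: (j =P b.1.2) => [->|_];
  rewrite //= ltnn.
Qed.

Lemma on_bundle_out_size :
  size r.2 + flags st b.1.1.2 b.1.2 <= flags r.1 b.1.1.2 b.1.2.
Proof.
rewrite /on_bundle /flags; case: ifP => [/andP[/negbTE fresh _]|_] //=.
rewrite fresh; case: ifP => _; case: ifP => /=; rewrite ?eqxx;
  by case: (signed st _ _); rewrite //= ?leq_addr.
Qed.

End Handler.

Lemma count_const (T : Type) (c : bool) (s : seq T) :
  count (fun=> c) s = c * size s.
Proof. by elim: s => [|_ s IH] /=; rewrite ?muln0 // IH mulnS. Qed.

Lemma count_partition (T : Type) (I : finType) (f : T -> I) (P : pred T)
    (s : seq T) :
  count P s = \sum_(i : I) count (fun x => (f x == i) && P x) s.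
Proof.
elim: s => [|x s IH] /=; first by rewrite big1.
rewrite big_split /= -IH (bigD1 (f x)) //= eqxx big1 ?addn0 // => i.
by rewrite eq_sym => /negbTE->.
Qed.

Section Broadcast.
Variables (n : nat) (M : eqType).

Definition slot sn (j : proc n) (b : bundle n M) :=
  (b.1.1.2 == sn) && (b.1.2 == j).

Definition sent_by (k : proc n) sn j (e : netmsg n M) :=
  (e.1.1 == k) && slot sn j e.2.

Lemma count_sent_by_bcast k' sn j k b :
  count (sent_by k' sn j) (bcast k b) = ((k == k') && slot sn j b) * n.
Proof.
rewrite count_map (eq_count (a2 := fun=> (k == k') && slot sn j b)) //.
by rewrite count_const size_enum_ord.
Qed.

Lemma count_sent_by_flatten_bcast k' sn j k out :
  count (sent_by k' sn j) (flatten [seq bcast k o | o <- out]) =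
  (k == k') * count (slot sn j) out * n.
Proof.
elim: out => [|o out IH] /=; first by rewrite muln0 mul0n.
rewrite count_cat IH count_sent_by_bcast.
by case: (k == k'); rewrite ?mul1n ?mulnDl.
Qed.

End Broadcast.

Section Execution.
Variables (n t : nat) (M : eqType) (B : {set 'I_n}).

(* Unforgeability as a state invariant ([s.1] signs the triplet [s.2]). *)
Definition authentic (c : config n M) (s : signature n M) : Prop :=
  s.1 \notin B -> s.2.2 = s.1 -> (s.1, s.2.1.1, s.2.1.2) \in invoked c.

Definition sent_from (c : config n M) k sn j := count (sent_by k sn j) (sent c).

Record invariant (c : config n M) : Prop := Invariant {
  net_sent : {subset net c <= sent c};
  saved_authentic :
    forall k tr, {in saved (lst c k) tr, forall s, authentic c s};
  sent_authentic : forall e s, e \in sent c -> s \in e.2.2 -> authentic c s;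
  flags_invoked : forall k sn, k \notin B -> 0 < flags (lst c k) sn k ->
    exists m, (k, m, sn) \in invoked c;
  sent_from_flags :
    forall k sn j, sent_from c k sn j <= flags (lst c k) sn j * n }.

Lemma on_bundle_saved_authentic c k st b tr s :
  (forall tr, {in saved st tr, forall s, authentic c s}) ->
  {in b.2, forall s, authentic c s} ->
  s \in saved (on_bundle t k st b).1 tr -> authentic c s.
Proof.
move=> savedA bA; case/on_bundle_saved => [/savedA | /bA | [-> orig]] //.
rewrite /authentic /= => correct own; rewrite -own in correct *.
exact: bA orig correct erefl.
Qed.

Lemma invariant0 : invariant (config0 n M).
Proof. by split. Qed.

Lemma invariant_receive c k net' b :
  invariant c -> {subset net' <= sent c} ->
  {in b.2, forall s, authentic c s} ->
  invariant (do_receive t c k net' b).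
Proof.
case=> _ savedA sentA flagsI sentF net'_sent bA.
have r_out := @on_bundle_out n t M k (lst c k) b.
have r_savedA tr s :=
  @on_bundle_saved_authentic c k (lst c k) b tr s (savedA k) bA.
set r := on_bundle t k (lst c k) b in r_out r_savedA *.
have outA e s :
    e \in flatten [seq bcast k o | o <- r.2] -> s \in e.2.2 -> authentic c s.
  by case/flattenP=> _ /mapP[o /r_out-> ->] /mapP[? _ ->]; apply: r_savedA.
rewrite /do_receive /upd_lst; split=> /=.
- by move=> e; rewrite !mem_cat => /orP[/net'_sent->|->]; rewrite ?orbT.
- by move=> k' tr s; case: eqP => _; [apply: r_savedA | apply: savedA].
- move=> e s; rewrite mem_cat => /orP[e_sent | e_out].
    exact: sentA e_sent.
  exact: outA e_out.
- move=> k' sn correct_k'; case: eqP => [? | _]; last exact: flagsI; subst k'.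
  have [f0 | /(flagsI _ _ correct_k') //] := posnP (flags (lst c k) sn k).
  rewrite -f0 => /on_bundle_flags_grow[-> own orig].
  rewrite own in correct_k' *.
  by exists b.1.1.1; exact: bA orig correct_k' erefl.
move=> k' sn j; rewrite /sent_from count_cat count_sent_by_flatten_bcast eq_sym.
case: eqP => [? | _]; last by rewrite mul0n addn0 sentF.
subst k'; rewrite mul1n -/r.
have -> : count (slot sn j) r.2 = slot sn j b * size r.2.
  by rewrite -count_const; apply: eq_in_count => o /r_out->.
have [/andP[/eqP<- /eqP<-] | _] := boolP (slot sn j b).
  rewrite mul1n (leq_trans (leq_add (sentF _ _ _) (leqnn _))) //.
  by rewrite -mulnDl leq_mul2r addnC on_bundle_out_size orbT.
rewrite mul0n addn0 (leq_trans (sentF _ _ _)) //.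
by rewrite leq_mul2r on_bundle_flags_mono orbT.
Qed.

Lemma invariant_invoke c i m sn :
  invariant c -> i \notin B ->
  ~~ has (fun e : proc n * M * nat => (e.1.1 == i) && (e.2 == sn))
         (invoked c) ->
  invariant (do_invoke c i m sn).
Proof.
case=> net_sent savedA sentA flagsI sentF correct_i fresh.
have invoked_mono x : x \in invoked c -> x \in invoked (do_invoke c i m sn).
  by rewrite /= mem_rcons inE => ->; rewrite orbT.
have authentic_mono s : authentic c s -> authentic (do_invoke c i m sn) s.
  by move=> A correct own; apply/invoked_mono/A.
pose S := save_new (saved (lst c i) (m, sn, i)) (m, sn, i) [:: (i, (m, sn, i))].
have S_authentic s : s \in S -> authentic (do_invoke c i m sn) s.
  case/mem_save_new/orP => [/savedA/authentic_mono // | ].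
  by rewrite inE => /eqP-> _ _; rewrite /= mem_rcons mem_head.
have flags0 : flags (lst c i) sn i = 0.
  apply/eqP; rewrite -leqn0 leqNgt.
  apply/negP => /(flagsI _ _ correct_i)[m' inv].
  by case/negP: fresh; apply/hasP; exists (i, m', sn); rewrite //= !eqxx.
rewrite /do_invoke /upd_lst; split=> /=.
- by move=> e; rewrite !mem_cat => /orP[/net_sent->|->]; rewrite ?orbT.
- move=> k tr s; case: eqP => _ /=; last by move/savedA/authentic_mono.
  by case: eqP => _; [move/S_authentic | move/savedA/authentic_mono].
- move=> e s; rewrite mem_cat => /orP[e_sent | /mapP[k _ ->] /S_authentic //].
  by move/(sentA _ _ e_sent)/authentic_mono.
- move=> k sn' correct_k; case: eqP => [? | _]; last first.
    by case/(flagsI _ _ correct_k) => m' /invoked_mono; exists m'.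
  subst k; case: (sn' =P sn) => [-> _ | ne].
    by exists m; rewrite mem_rcons mem_head.
  rewrite /flags /= (introF eqP ne) /=.
  by case/(flagsI _ _ correct_i) => m' /invoked_mono; exists m'.
move=> k sn' j; rewrite /sent_from count_cat count_sent_by_bcast /slot /flags.
have [->|ne] := eqVneq k i; rewrite /=; last by rewrite addn0 sentF.
have [/andP[/eqP<- /eqP<-] | _] := boolP ((sn == sn') && (i == j)).
  have := sentF i sn i; rewrite /sent_from flags0 mul0n leqn0 => /eqP->.
  by rewrite !eqxx mulnDl leq_addr.
rewrite addn0 (leq_trans (sentF _ _ _)) // leq_mul2r leq_add2r.
by case: (signed _ _ _); rewrite /= ?orbT.
Qed.

Lemma reachable_invariant c : reachable t B c -> invariant c.
Proof.
elim=> [|c0 c' _ inv_c0 step_c0]; first exact: invariant0.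
have [net_sent _ sentA _ _] := inv_c0.
case: c0 c' / step_c0 inv_c0 net_sent sentA
  => [c0 i m sn | c0 i k b | c0 j k b].
- by move=> correct_i fresh inv_c0 _ _; apply: invariant_invoke.
- move=> _ b_net inv_c0 net_sent sentA; apply: invariant_receive => //.
    by move=> e /mem_rem; apply: net_sent.
  by move=> s; apply: sentA (net_sent _ b_net).
- move=> _ _ forged inv_c0 net_sent sentA.
  apply: invariant_receive => // s s_b.
  have /orP[byz_s|/hasP[e e_sent /andP[_ s_e]]] := allP forged s s_b.
    by rewrite /authentic byz_s.
  exact: sentA e_sent s_e.
Qed.

Lemma sent_from_le c k sn j : invariant c -> sent_from c k sn j <= 2 * n.
Proof.
case=> _ _ _ _ /(_ k sn j) /leq_trans; apply.
by rewrite leq_mul2r (leq_add (leq_b1 _) (leq_b1 _)) orbT.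
Qed.

End Execution.

Unset Implicit Arguments.

Theorem mainTheorem11 (n t d : nat) (M : eqType) (B : {set 'I_n}) :
  #|B| <= t -> d < n - #|B| -> 3 * t + 2 * d < n ->
  forall c : config n M, reachable t B c ->
  forall (i : 'I_n) (m : M) (sn : nat),
    i \notin B -> (i, m, sn) \in invoked c ->
    imp_msgs_for B c (m, sn, i) <= 2 * n ^ 2.
Proof.
move=> _ _ _ c reach_c i m sn _ _.
have inv_c := reachable_invariant reach_c.
rewrite /imp_msgs_for (@leq_trans (count (slot sn i \o snd) (sent c))) //.
  by apply: sub_count => e /andP[_ /eqP e_tr]; rewrite /= /slot e_tr !eqxx.
rewrite (count_partition (fun e : netmsg n M => e.1.1)).
apply: (@leq_trans (\sum_(k < n) 2 * n)).
  by apply: leq_sum => k _; apply: sent_from_le inv_c.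
by rewrite sum_nat_const card_ord mulnCA.
Qed.
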